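(* Let $r>0$, $0<p<1$, $q=1-p$, and $X\sim\mathcal{UNB}(r,p)$. Then $$\mathbb{E}(X)=\frac{rq}{2p},\qquad \mathbb{V}(X)=\frac{rq}{12p}\left(6+\frac{4q}{p}+\frac{rq}{p}\right),$$ and the index of dispersion satisfies $\frac{\mathbb{V}(X)}{\mathbb{E}(X)}=1+\frac{4q}{6p}+\frac{rq}{6p}>1$, so $X$ is always overdispersed.
   Context: $\mathcal{UNB}(r,p)$ is the law of $X$ where $N$ is negative binomial with $P(N=n)=\binom{r+n-1}{n}p^rq^n=\frac{\Gamma(r+n)}{n!\Gamma(r)}p^rq^n$, $n\ge0$, and conditionally on $N=n$, $X$ is uniform on $\{0,1,\dots,n\}$. *)

From Stdlib Require Import Reals.
From Coquelicot Require Import Coquelicot.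
Open Scope R_scope.

(* rising factorial r (r+1) ... (r+n-1) = Gamma(r+n)/Gamma(r) for r > 0 *)
Fixpoint rising (r : R) (n : nat) : R :=
  match n with
  | O => 1
  | S m => rising r m * (r + INR m)
  end.

(* negative binomial pmf: P(N = n) = Gamma(r+n)/(n! Gamma(r)) p^r q^n *)
Definition nb_pmf (r p : R) (n : nat) : R :=
  rising r n / INR (Factorial.fact n) * Rpower p r * (1 - p) ^ n.

Definition unb_pmf (r p : R) (k : nat) : R :=
  Series (fun j => nb_pmf r p (k + j) / INR (k + j + 1)).

Definition expect (f : nat -> R) : R := Series (fun k => INR k * f k).
Definition variance (f : nat -> R) : R :=
  Series (fun k => (INR k - expect f) ^ 2 * f k).

From Stdlib Require Import Reals Lra Lia.
From Coquelicot Require Import Coquelicot.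
Open Scope R_scope.

(* Conditionally on N = n, X is uniform on {0, ..., n}, so E g(X) = E [(1/(N+1)) sum_{k <= N} g k];
   for g = 1, k, k^2 this gives E X = E N / 2 and E X^2 = E (2 N^2 + N) / 6.  The negative
   binomial moments E N = rq/p and E N^2 = rq(rq+1)/p^2 follow from the recurrence
   (n+1) P(N = n+1) = q (r+n) P(N = n) once the total mass is known to be 1.  That is the
   binomial series sum_n rising r n / n! x^n = (1-x)^(-r): the power series A satisfies
   (1-x) A' = r A, so (1-x)^r A(x) has derivative 0. *)

Lemma is_series_Rplus (a b : nat -> R) (la lb : R) :
  is_series a la -> is_series b lb -> is_series (fun n => a n + b n) (la + lb).
Proof. exact (is_series_plus a b la lb). Qed.

Lemma is_series_Rmult_l (c : R) (a : nat -> R) (l : R) :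
  is_series a l -> is_series (fun n => c * a n) (c * l).
Proof. exact (is_series_scal_l c a l). Qed.

Lemma is_series_ext_R (a b : nat -> R) (l : R) :
  (forall n, a n = b n) -> is_series a l -> is_series b l.
Proof. exact (is_series_ext a b l). Qed.

Lemma ex_series_Rabs_le (a b : nat -> R) :
  (forall n, Rabs (a n) <= b n) -> ex_series b -> ex_series a.
Proof. exact (@ex_series_le R_AbsRing R_CompleteNormedModule a b). Qed.

Lemma is_series_limit_unique (a : nat -> R) (l1 l2 : R) :
  is_series a l1 -> is_series a l2 -> l1 = l2.
Proof. intros H1 H2. now rewrite <- (is_series_unique _ _ H1), (is_series_unique _ _ H2). Qed.

Lemma is_series_iff_lim_sum_f_R0 (a : nat -> R) (l : R) :
  is_series a l <-> is_lim_seq (sum_f_R0 a) l.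
Proof. now rewrite is_series_Reals, is_lim_seq_Reals. Qed.

Lemma is_series_incr_1_0 (a : nat -> R) (l : R) :
  a 0%nat = 0 -> is_series a l -> is_series (fun k => a (S k)) l.
Proof.
  intros H0 H. apply is_series_incr_1.
  rewrite H0. unfold plus; simpl. now rewrite Rplus_0_r.
Qed.

Lemma is_series_decr_1_0 (a : nat -> R) (l : R) :
  a 0%nat = 0 -> is_series (fun k => a (S k)) l -> is_series a l.
Proof.
  intros H0 H. apply is_series_decr_1.
  rewrite H0. unfold plus, opp; simpl. now rewrite Ropp_0, Rplus_0_r.
Qed.

Lemma Series_nonneg (a : nat -> R) : (forall n, 0 <= a n) -> ex_series a -> 0 <= Series a.
Proof.
  intros Ha Hex.
  assert (H := Series_le (fun n => 0 * a n) a).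
  rewrite Series_scal_l, Rmult_0_l in H.
  apply H; [intro n; specialize (Ha n); lra | exact Hex].
Qed.

Lemma sum_f_R0_le_mono (g : nat -> R) (n m : nat) :
  (forall k, 0 <= g k) -> (n <= m)%nat -> sum_f_R0 g n <= sum_f_R0 g m.
Proof.
  intros Hg Hnm. induction Hnm as [|m _ IH]; [lra|].
  simpl. specialize (Hg (S m)). lra.
Qed.

Lemma sum_f_R0_abel (b g T : nat -> R) (K : nat) :
  (forall k, T k = b k + T (S k)) ->
  sum_f_R0 (fun k => g k * T k) K =
  sum_f_R0 (fun n => b n * sum_f_R0 g n) K + sum_f_R0 g K * T (S K).
Proof.
  intros HT. induction K as [|K IH]; simpl.
  - rewrite (HT 0%nat). ring.
  - rewrite IH, (HT (S K)). ring.
Qed.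

(* Tonelli for the triangle {k <= n}: sum_k g k * sum_{n >= k} b n = sum_n b n * sum_{k <= n} g k. *)
Lemma is_series_tails (b g : nat -> R) (L : R) :
  (forall n, 0 <= b n) -> (forall k, 0 <= g k) -> ex_series b ->
  is_series (fun n => b n * sum_f_R0 g n) L ->
  is_series (fun k => g k * Series (fun j => b (k + j)%nat)) L.
Proof.
  intros Hb Hg Hex HL.
  set (T := fun k => Series (fun j => b (k + j)%nat)).
  set (B := fun n => b n * sum_f_R0 g n) in HL.
  assert (Htail : forall k, ex_series (fun j => b (k + j)%nat))
    by (intro k; now apply ex_series_incr_n).
  assert (HT : forall k, T k = b k + T (S k)).
  { intro k. unfold T. rewrite Series_incr_1 by apply Htail.
    rewrite Nat.add_0_r. f_equal. apply Series_ext. intro j. now rewrite Nat.add_succ_r. }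
  assert (Hbound : forall K, 0 <= sum_f_R0 g K * T (S K) <= L - sum_f_R0 B K).
  { intro K. split.
    - apply Rmult_le_pos; [now apply cond_pos_sum | now apply Series_nonneg].
    - rewrite <- (is_series_unique _ _ HL).
      rewrite (Series_incr_n B (S K)) by (lia || now exists L). cbn [Nat.pred].
      replace (sum_f_R0 B K + Series (fun k => B (S K + k)%nat) - sum_f_R0 B K)
        with (Series (fun k => B (S K + k)%nat)) by ring.
      unfold T. rewrite <- Series_scal_l. apply Series_le.
      + intro j. split; [apply Rmult_le_pos; [now apply cond_pos_sum | apply Hb]|].
        unfold B. rewrite Rmult_comm. apply Rmult_le_compat_l; [apply Hb|].
        apply sum_f_R0_le_mono; [exact Hg | lia].
      + now apply (ex_series_incr_n B (S K)); exists L. }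
  change (is_series (fun k => g k * T k) L).
  apply is_series_iff_lim_sum_f_R0. apply is_series_iff_lim_sum_f_R0 in HL.
  apply is_lim_seq_le_le with (u := sum_f_R0 B) (w := fun _ => L);
    [| exact HL | apply is_lim_seq_const].
  intro K. rewrite (sum_f_R0_abel b g T K HT); fold B. specialize (Hbound K). lra.
Qed.

Definition nb_coef (r : R) (n : nat) : R := rising r n / INR (Factorial.fact n).

Lemma rising_pos (r : R) (n : nat) : 0 < r -> 0 < rising r n.
Proof.
  intro hr. induction n as [|n IH]; simpl; [lra|].
  apply Rmult_lt_0_compat; [exact IH|]. pose proof (pos_INR n). lra.
Qed.

Lemma nb_coef_pos (r : R) (n : nat) : 0 < r -> 0 < nb_coef r n.
Proof. intro hr. apply Rdiv_lt_0_compat; [now apply rising_pos | apply INR_fact_lt_0]. Qed.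

Lemma nb_coef_S (r : R) (n : nat) : nb_coef r (S n) = (r + INR n) / (INR n + 1) * nb_coef r n.
Proof.
  unfold nb_coef. simpl rising. change (Factorial.fact (S n)) with (S n * Factorial.fact n)%nat.
  rewrite mult_INR, S_INR. pose proof (INR_fact_neq_0 n). pose proof (pos_INR n).
  field. lra.
Qed.

Lemma is_lim_seq_inv_INR_S : is_lim_seq (fun n => / (INR n + 1)) 0.
Proof.
  assert (H : is_lim_seq (fun n => INR (S n)) p_infty)
    by (apply (is_lim_seq_incr_1 INR), is_lim_seq_INR).
  apply is_lim_seq_inv in H; [| discriminate].
  apply is_lim_seq_ext with (2 := H). intro n. now rewrite S_INR.
Qed.

Lemma CV_radius_nb_coef (r : R) : 0 < r -> CV_radius (nb_coef r) = 1.
Proof.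
  intro hr. rewrite (CV_radius_finite_DAlembert _ 1), Rinv_1; [reflexivity | | lra |].
  - intro n. pose proof (nb_coef_pos r n hr). lra.
  - assert (H : is_lim_seq (fun n => 1 + (r - 1) * / (INR n + 1)) (1 + (r - 1) * 0)).
    { apply is_lim_seq_plus'; [apply is_lim_seq_const|].
      apply is_lim_seq_mult'; [apply is_lim_seq_const | apply is_lim_seq_inv_INR_S]. }
    rewrite Rmult_0_r, Rplus_0_r in H.
    apply is_lim_seq_abs in H. simpl in H. rewrite Rabs_R1 in H.
    apply is_lim_seq_ext with (2 := H). intro n.
    rewrite nb_coef_S. pose proof (nb_coef_pos r n hr). pose proof (pos_INR n).
    f_equal. field. lra.
Qed.

Lemma is_series_PSeries (a : nat -> R) (x : R) :
  Rbar_lt (Rabs x) (CV_radius a) -> is_series (fun k => a k * x ^ k) (PSeries a x).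
Proof.
  intro Hx. apply is_series_ext_R with (2 := PSeries_correct _ _ (CV_radius_inside _ _ Hx)).
  intro k. rewrite pow_n_pow. apply Rmult_comm.
Qed.

Lemma PSeries_nb_coef_derive (r x : R) : 0 < r -> Rabs x < 1 ->
  (1 - x) * PSeries (PS_derive (nb_coef r)) x = r * PSeries (nb_coef r) x.
Proof.
  intros hr hx.
  assert (Hrad : Rbar_lt (Rabs x) (CV_radius (nb_coef r))) by now rewrite CV_radius_nb_coef.
  set (D := PSeries (PS_derive (nb_coef r)) x). set (A := PSeries (nb_coef r) x).
  set (u := fun k => (r + INR k) * nb_coef r k * x ^ k).
  assert (HD : is_series u D).
  { apply is_series_ext_R with (fun k => PS_derive (nb_coef r) k * x ^ k).
    - intro k. unfold u, PS_derive. rewrite nb_coef_S, S_INR. pose proof (pos_INR k).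
      field. lra.
    - apply is_series_PSeries. now rewrite CV_radius_derive. }
  assert (HA : is_series (fun k => nb_coef r k * x ^ k) A) by now apply is_series_PSeries.
  assert (HxD : is_series (fun k => INR k * nb_coef r k * x ^ k) (x * D)).
  { apply is_series_decr_1_0; [simpl; ring|].
    apply is_series_ext_R with (2 := is_series_Rmult_l x _ _ HD).
    intro k. unfold u. rewrite nb_coef_S, S_INR. simpl. pose proof (pos_INR k). field. lra. }
  assert (HD' : is_series u (r * A + x * D)).
  { apply is_series_ext_R with (2 := is_series_Rplus _ _ _ _ (is_series_Rmult_l r _ _ HA) HxD).
    intro k. unfold u. ring. }
  assert (E := is_series_limit_unique _ _ _ HD HD'). lra.
Qed.

Lemma PSeries_nb_coef (r x : R) : 0 < r -> 0 < x < 1 ->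
  exp (r * ln (1 - x)) * PSeries (nb_coef r) x = 1.
Proof.
  intros hr hx.
  set (h := fun t => exp (r * ln (1 - t)) * PSeries (nb_coef r) t).
  assert (Hconst : h 0 = h x).
  { apply eq_is_derive; [| lra]. intros t Ht.
    assert (ht : Rabs t < 1) by (rewrite Rabs_pos_eq; lra).
    assert (Hrad : Rbar_lt (Rabs t) (CV_radius (nb_coef r))) by now rewrite CV_radius_nb_coef.
    assert (He : is_derive (fun t => exp (r * ln (1 - t))) t
                   (- r / (1 - t) * exp (r * ln (1 - t))))
      by (auto_derive; [lra | unfold Rminus; field; lra]).
    assert (Hh := is_derive_mult _ _ t _ _ He (is_derive_PSeries _ _ Hrad) Rmult_comm).
    match goal with |- is_derive _ _ ?z => match type of Hh with is_derive _ _ ?d =>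
      replace z with d; [exact Hh|] end end.
    unfold plus, mult, zero; simpl.
    replace (PSeries (PS_derive (nb_coef r)) t) with (r * PSeries (nb_coef r) t / (1 - t)).
    - field. lra.
    - rewrite <- (PSeries_nb_coef_derive r t hr ht). field. lra. }
  unfold h in Hconst. rewrite Rminus_0_r, ln_1, Rmult_0_r, exp_0, PSeries_0 in Hconst.
  rewrite <- Hconst. unfold nb_coef. simpl. field.
Qed.

Lemma nb_pmf_S (r p : R) (n : nat) :
  nb_pmf r p (S n) = (1 - p) * (r + INR n) / (INR n + 1) * nb_pmf r p n.
Proof.
  unfold nb_pmf. fold (nb_coef r (S n)) (nb_coef r n). rewrite nb_coef_S. simpl.
  pose proof (pos_INR n). field. lra.
Qed.

Definition unif_avg (g : nat -> R) (n : nat) : R := sum_f_R0 g n / INR (S n).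

Lemma unif_avg_const_1 (n : nat) : unif_avg (fun _ => 1) n = 1.
Proof. unfold unif_avg. rewrite sum_cte. pose proof (lt_0_INR (S n) (Nat.lt_0_succ n)). field. lra. Qed.

Lemma unif_avg_INR (n : nat) : unif_avg INR n = INR n / 2.
Proof. unfold unif_avg. rewrite sum_INR, S_INR. pose proof (pos_INR n). field. lra. Qed.

Lemma sum_f_R0_INR_sq (n : nat) :
  sum_f_R0 (fun k => INR k ^ 2) n = INR n * (INR n + 1) * (2 * INR n + 1) / 6.
Proof. induction n as [|n IH]; [simpl; field|]. rewrite tech5, IH, S_INR. field. Qed.

Lemma unif_avg_INR_sq (n : nat) : unif_avg (fun k => INR k ^ 2) n = INR n * (2 * INR n + 1) / 6.
Proof. unfold unif_avg. rewrite sum_f_R0_INR_sq, S_INR. pose proof (pos_INR n). field. lra. Qed.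

Section NegativeBinomialMixture.

Variables r p : R.
Hypothesis hr : 0 < r.
Hypothesis hp : 0 < p < 1.

Lemma nb_pmf_pos (n : nat) : 0 < nb_pmf r p n.
Proof.
  apply Rmult_lt_0_compat; [apply Rmult_lt_0_compat|].
  - now apply nb_coef_pos.
  - apply exp_pos.
  - apply pow_lt. lra.
Qed.

Lemma ex_series_nb_pmf_sq :
  ex_series (fun n => (INR n + 1) ^ 2 * nb_pmf r p n).
Proof.
  apply ex_series_Rabs, (ex_series_DAlembert _ (1 - p)); [lra | |].
  - intro n. pose proof (nb_pmf_pos n). pose proof (pos_INR n). nra.
  - set (e := fun n => / (INR n + 1)).
    assert (H : is_lim_seq (fun n => (1 - p) * ((1 + e n) * (1 + e n) * (1 + (r - 1) * e n)))
                  ((1 - p) * ((1 + 0) * (1 + 0) * (1 + (r - 1) * 0)))).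
    { assert (He1 : is_lim_seq (fun n => 1 + e n) (1 + 0))
        by (apply is_lim_seq_plus'; [apply is_lim_seq_const | apply is_lim_seq_inv_INR_S]).
      apply is_lim_seq_mult'; [apply is_lim_seq_const|].
      apply is_lim_seq_mult'; [now apply is_lim_seq_mult'|].
      apply is_lim_seq_plus'; [apply is_lim_seq_const|].
      apply is_lim_seq_mult'; [apply is_lim_seq_const | apply is_lim_seq_inv_INR_S]. }
    replace ((1 - p) * ((1 + 0) * (1 + 0) * (1 + (r - 1) * 0))) with (1 - p) in H by ring.
    apply is_lim_seq_abs in H. simpl in H. rewrite Rabs_pos_eq in H by lra.
    apply is_lim_seq_ext with (2 := H). intro n.
    rewrite nb_pmf_S, S_INR. pose proof (nb_pmf_pos n). pose proof (pos_INR n).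
    f_equal. unfold e. field. lra.
Qed.

Lemma is_series_nb_pmf : is_series (nb_pmf r p) 1.
Proof.
  assert (Hrad : Rbar_lt (Rabs (1 - p)) (CV_radius (nb_coef r)))
    by (rewrite CV_radius_nb_coef, Rabs_pos_eq by lra; simpl; lra).
  assert (Hnorm : Rpower p r * PSeries (nb_coef r) (1 - p) = 1).
  { unfold Rpower. replace (ln p) with (ln (1 - (1 - p))) by (f_equal; ring).
    apply PSeries_nb_coef; lra. }
  assert (H := is_series_Rmult_l (Rpower p r) _ _ (is_series_PSeries _ _ Hrad)).
  rewrite Hnorm in H. apply is_series_ext_R with (2 := H).
  intro n. unfold nb_pmf, nb_coef. ring.
Qed.

Lemma is_series_nb_pmf_mean :
  is_series (fun n => INR n * nb_pmf r p n) (r * (1 - p) / p).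
Proof.
  assert (Hex : ex_series (fun n => INR n * nb_pmf r p n)).
  { apply ex_series_Rabs_le with (2 := ex_series_nb_pmf_sq). intro n.
    pose proof (nb_pmf_pos n). pose proof (pos_INR n).
    rewrite Rabs_pos_eq; nra. }
  assert (HM := Series_correct _ Hex). set (M := Series _) in HM.
  assert (HrecM : M = (1 - p) * (r * 1 + M)).
  { apply (is_series_limit_unique (fun n => INR (S n) * nb_pmf r p (S n))).
    - apply (is_series_incr_1_0 (fun n => INR n * nb_pmf r p n)); [simpl; ring | exact HM].
    - apply is_series_ext_R with (fun n => (1 - p) * (r * nb_pmf r p n + INR n * nb_pmf r p n)).
      + intro n. rewrite nb_pmf_S, S_INR. pose proof (pos_INR n). field. lra.
      + apply is_series_Rmult_l, is_series_Rplus; [|exact HM].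
        now apply is_series_Rmult_l, is_series_nb_pmf. }
  replace (r * (1 - p) / p) with M; [exact HM|].
  apply (Rmult_eq_reg_l p); [|lra].
  replace (p * M) with ((1 - p) * r) by lra. field. lra.
Qed.

Lemma is_series_nb_pmf_second_moment :
  is_series (fun n => INR n ^ 2 * nb_pmf r p n) (r * (1 - p) * (r * (1 - p) + 1) / p ^ 2).
Proof.
  assert (Hex : ex_series (fun n => INR n ^ 2 * nb_pmf r p n)).
  { apply ex_series_Rabs_le with (2 := ex_series_nb_pmf_sq). intro n.
    pose proof (nb_pmf_pos n). pose proof (pos_INR n).
    rewrite Rabs_pos_eq; nra. }
  assert (HM2 := Series_correct _ Hex). set (M2 := Series _) in HM2.
  assert (HM1 := is_series_nb_pmf_mean).
  assert (HrecM2 : M2 = (1 - p) * (M2 + (r + 1) * (r * (1 - p) / p) + r * 1)).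
  { apply (is_series_limit_unique (fun n => INR (S n) ^ 2 * nb_pmf r p (S n))).
    - apply (is_series_incr_1_0 (fun n => INR n ^ 2 * nb_pmf r p n)); [simpl; ring | exact HM2].
    - apply is_series_ext_R with (fun n => (1 - p) * (INR n ^ 2 * nb_pmf r p n
          + (r + 1) * (INR n * nb_pmf r p n) + r * nb_pmf r p n)).
      + intro n. rewrite nb_pmf_S, S_INR. pose proof (pos_INR n). field. lra.
      + apply is_series_Rmult_l, is_series_Rplus; [apply is_series_Rplus|].
        * exact HM2.
        * now apply is_series_Rmult_l.
        * now apply is_series_Rmult_l, is_series_nb_pmf. }
  replace (r * (1 - p) * (r * (1 - p) + 1) / p ^ 2) with M2; [exact HM2|].
  apply (Rmult_eq_reg_l p); [|lra].
  replace (p * M2) with ((1 - p) * ((r + 1) * (r * (1 - p) / p) + r)) by lra. field. lra.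
Qed.

Lemma is_series_unb_pmf_avg (g : nat -> R) (L : R) :
  (forall k, 0 <= g k) ->
  is_series (fun n => nb_pmf r p n * unif_avg g n) L ->
  is_series (fun k => g k * unb_pmf r p k) L.
Proof.
  intros Hg HL.
  set (b := fun n => nb_pmf r p n / INR (n + 1)).
  assert (Hb_le : forall n, 0 <= b n <= nb_pmf r p n).
  { intro n. unfold b. rewrite Nat.add_1_r, S_INR.
    pose proof (nb_pmf_pos n). pose proof (pos_INR n). split.
    - apply Rlt_le, Rdiv_lt_0_compat; lra.
    - apply Rmult_le_reg_r with (INR n + 1); [lra|]. field_simplify; nra. }
  apply (is_series_tails b g L); [apply Hb_le | exact Hg | |].
  - apply ex_series_Rabs_le with (nb_pmf r p); [|now exists 1; apply is_series_nb_pmf].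
    intro n. rewrite Rabs_pos_eq; apply Hb_le.
  - apply is_series_ext_R with (2 := HL). intro n.
    unfold b, unif_avg. rewrite Nat.add_1_r. unfold Rdiv. ring.
Qed.

Lemma is_series_unb_pmf : is_series (unb_pmf r p) 1.
Proof.
  apply is_series_ext_R with (fun k => 1 * unb_pmf r p k); [intro k; ring|].
  apply is_series_unb_pmf_avg; [intro k; lra |].
  apply is_series_ext_R with (2 := is_series_nb_pmf).
  intro n. rewrite unif_avg_const_1. ring.
Qed.

Lemma is_series_unb_pmf_mean :
  is_series (fun k => INR k * unb_pmf r p k) (r * (1 - p) / (2 * p)).
Proof.
  apply is_series_unb_pmf_avg; [exact pos_INR |].
  replace (r * (1 - p) / (2 * p)) with (/ 2 * (r * (1 - p) / p)) by (field; lra).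
  apply is_series_ext_R with (2 := is_series_Rmult_l (/ 2) _ _ is_series_nb_pmf_mean).
  intro n. rewrite unif_avg_INR. field.
Qed.

Lemma is_series_unb_pmf_second_moment :
  is_series (fun k => INR k ^ 2 * unb_pmf r p k)
    (r * (1 - p) * (2 * r * (1 - p) + 2 + p) / (6 * p ^ 2)).
Proof.
  apply is_series_unb_pmf_avg; [intro k; apply pow2_ge_0 |].
  replace (r * (1 - p) * (2 * r * (1 - p) + 2 + p) / (6 * p ^ 2))
    with (/ 6 * (2 * (r * (1 - p) * (r * (1 - p) + 1) / p ^ 2) + r * (1 - p) / p))
    by (field; lra).
  apply is_series_ext_R with (2 := is_series_Rmult_l (/ 6) _ _ (is_series_Rplus _ _ _ _
    (is_series_Rmult_l 2 _ _ is_series_nb_pmf_second_moment)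
    is_series_nb_pmf_mean)).
  intro n. rewrite unif_avg_INR_sq. field.
Qed.

End NegativeBinomialMixture.

Lemma is_series_variance (f : nat -> R) (m s : R) :
  is_series f 1 -> is_series (fun k => INR k * f k) m ->
  is_series (fun k => INR k ^ 2 * f k) s ->
  is_series (fun k => (INR k - m) ^ 2 * f k) (s - m ^ 2).
Proof.
  intros H0 H1 H2.
  replace (s - m ^ 2) with (s + -2 * m * m + m ^ 2 * 1) by ring.
  apply is_series_ext_R with (fun k => INR k ^ 2 * f k + -2 * m * (INR k * f k) + m ^ 2 * f k);
    [intro k; ring|].
  apply is_series_Rplus; [apply is_series_Rplus|]; [exact H2 | |]; now apply is_series_Rmult_l.
Qed.

Theorem mainTheorem8 (r p : R) (hr : 0 < r) (hp0 : 0 < p) (hp1 : p < 1) :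
  let q := 1 - p in
  let f := unb_pmf r p in
  ex_series (fun k => INR k * f k) /\
  ex_series (fun k => (INR k - expect f) ^ 2 * f k) /\
  expect f = r * q / (2 * p) /\
  variance f = r * q / (12 * p) * (6 + 4 * q / p + r * q / p) /\
  variance f / expect f = 1 + 4 * q / (6 * p) + r * q / (6 * p) /\
  variance f / expect f > 1.
Proof.
  intros q f.
  assert (hp : 0 < p < 1) by lra.
  assert (hq : 0 < q) by (unfold q; lra).
  assert (Hmean := is_series_unb_pmf_mean r p hr hp).
  assert (Hm : expect f = r * q / (2 * p)) by exact (is_series_unique _ _ Hmean).
  assert (Hmean' : is_series (fun k => INR k * f k) (expect f)) by (rewrite Hm; exact Hmean).
  assert (Hvar := is_series_variance f _ _ (is_series_unb_pmf r p hr hp) Hmean'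
    (is_series_unb_pmf_second_moment r p hr hp)).
  assert (Hv : variance f = r * q / (12 * p) * (6 + 4 * q / p + r * q / p)).
  { unfold variance. rewrite (is_series_unique _ _ Hvar), Hm. unfold q. field. lra. }
  assert (Hratio : variance f / expect f = 1 + 4 * q / (6 * p) + r * q / (6 * p)).
  { rewrite Hv, Hm. field. repeat split; lra. }
  repeat split; [now exists (r * q / (2 * p)) | eexists; exact Hvar | exact Hm | exact Hv
    | exact Hratio |].
  rewrite Hratio.
  assert (0 < 4 * q / (6 * p)) by (apply Rdiv_lt_0_compat; lra).
  assert (0 < r * q / (6 * p)) by (apply Rdiv_lt_0_compat; nra).
  lra.
Qed.
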